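(* Let ${}_{\mathfrak Y}\mathfrak B_{\mathfrak X}$ be a left-free graph of bisets, and let $\dagger\in\mathfrak Y$, $*\in\mathfrak X$ be vertices. Then $\pi_1(\mathfrak B,\dagger,* )$ is a left-free biset, of degree (number of left orbits) equal to that of $\bigsqcup_{z\in\rho^{-1}( * )}B_z$.
   Context: Graphs and graphs of groups. A graph is a set $V\sqcup E$ with $x\mapsto x^-\in V$, $x\mapsto\bar x$, $\bar{\bar x}=x$, $x=x^-\iff x=\bar x\iff x\in V$; $x^+=(\bar x)^-$. Graph morphisms commute with these (may send edges to vertices); simplicial ones send edges to edges. A graph of groups is a connected graph with groups $G_x$ and homomorphisms $g\mapsto g^-\colon G_x\to G_{x^-}$, $g\mapsto\bar g\colon G_x\to G_{\bar x}$ ($G_x\to G_{\bar x}\to G_x$ identity, both identity for vertices); fundamental groupoid $\pi_1(\mathfrak X)$: objects $V$, generated by the $x\in\mathfrak X$ and elements of the $G_v$, relations of the $G_v$, $v=1\in G_v$, $x\bar x=1$, $g^-x=xg^+$ ($g^+=(\bar g)^-$); $\pi_1(\mathfrak X,v,w)$ = morphisms from $v$ to $w$. Graphs of bisets: a graph $\mathfrak B$, graph morphisms $\lambda\colon\mathfrak B\to\mathfrak Y$, $\rho\colon\mathfrak B\to\mathfrak X$, $G_{\lambda(z)}$-$G_{\rho(z)}$-bisets $B_z$ and congruences $b\mapsto b^-\colon B_z\to B_{z^-}$, $b\mapsto\bar b\colon B_z\to B_{\bar z}$ (same axioms), $b^+=(\bar b)^-$. Fundamental biset $\pi_1(\mathfrak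 B,\dagger,* )$: $\bigsqcup_{z\in V(\mathfrak B)}\pi_1(\mathfrak Y,\dagger,\lambda(z))\otimes_{G_{\lambda(z)}}B_z\otimes_{G_{\rho(z)}}\pi_1(\mathfrak X,\rho(z),* )$ modulo $q\otimes b^-\otimes p=q\lambda(z)\otimes b^+\otimes\overline{\rho(z)}p$ for edges $z$ ($\lambda(z),\overline{\rho(z)}$ as groupoid morphisms, trivial if vertices), a $\pi_1(\mathfrak Y,\dagger)$-$\pi_1(\mathfrak X,* )$-biset. Left-fibrant: $\rho$ simplicial and for every vertex $v\in\mathfrak B$ and edge $f\in\mathfrak X$ with $f^-=\rho(v)$, the map $\bigsqcup_{e\in\rho^{-1}(f),\,e^-=v}G_{\lambda(v)}\otimes_{G_{\lambda(e)}}B_e\to B_v$, $g\otimes b\mapsto gb^-$, is an isomorphism of $G_{\lambda(v)}$-$G_f$-bisets. Left-free: left-fibrant and every $B_z$ free as a left $G_{\lambda(z)}$-set. *)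

From Stdlib Require Import List Relations.
Import ListNotations.
Set Implicit Arguments.
Unset Strict Implicit.

Definition tr {A : Type} (P : A -> Type) {x y : A} (h : x = y) (u : P x) : P y :=
  match h in _ = y' return P y' with eq_refl => u end.
Arguments tr {A} P {x y} h u.

Definition quot (T : Type) (R : T -> T -> Prop) : Type :=
  { P : T -> Prop | exists x, forall y, P y <-> clos_refl_sym_trans T R x y }.

Definition bijective {A B : Type} (f : A -> B) : Prop :=
  (forall a a', f a = f a' -> a = a') /\ (forall b, exists a, f a = b).

Record Grp := {
  gcar :> Type;
  gmul : gcar -> gcar -> gcar;
  gone : gcar;
  ginv : gcar -> gcar;
  gmulA : forall a b c, gmul a (gmul b c) = gmul (gmul a b) c;
  gmul1l : forall a, gmul gone a = a;
  gmul1r : forall a, gmul a gone = a;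
  gmulVl : forall a, gmul (ginv a) a = gone;
  gmulVr : forall a, gmul a (ginv a) = gone }.

Record Hom (G H : Grp) := {
  hfun :> G -> H;
  hmul : forall a b, hfun (gmul a b) = gmul (hfun a) (hfun b) }.

Record Biset (G H : Grp) := {
  bcar :> Type;
  lact : G -> bcar -> bcar;
  ract : bcar -> H -> bcar;
  lact1 : forall s, lact (gone G) s = s;
  lactM : forall g g' s, lact (gmul g g') s = lact g (lact g' s);
  ract1 : forall s, ract s (gone H) = s;
  ractM : forall s h h', ract s (gmul h h') = ract (ract s h) h';
  lract : forall g s h, lact g (ract s h) = ract (lact g s) h }.

Definition left_free_set (G H : Grp) (S : Biset G H) : Prop :=
  forall (g : G) (s : S), lact g s = s -> g = gone G.

Record Graph := {
  el :> Type;
  src : el -> el;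
  bar : el -> el;
  src_src : forall x, src (src x) = src x;
  bar_bar : forall x, bar (bar x) = x;
  vert_iff : forall x, x = src x <-> x = bar x }.

Definition isV (X : Graph) (x : X) : Prop := src x = x.
Definition tgt (X : Graph) (x : X) : X := src (bar x).

Inductive reach (X : Graph) (v : X) : X -> Prop :=
  | reach0 : reach v v
  | reachS : forall e, reach v (src e) -> reach v (tgt e).

Definition connected (X : Graph) : Prop :=
  forall v w : X, isV v -> isV w -> reach v w.

Record GMor (X Y : Graph) := {
  gm :> X -> Y;
  gm_src : forall x, gm (src x) = src (gm x);
  gm_bar : forall x, gm (bar x) = bar (gm x) }.

Definition simplicial (X Y : Graph) (f : GMor X Y) : Prop :=
  forall x : X, ~ isV x -> ~ isV (f x).

Record GoG := {
  ggraph :> Graph;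
  ggrp : ggraph -> Grp;
  hsrc : forall x, Hom (ggrp x) (ggrp (src x));
  hbar : forall x, Hom (ggrp x) (ggrp (bar x));
  hbar_bar : forall x (g : ggrp x), tr ggrp (bar_bar x) (hbar (bar x) (hbar x g)) = g;
  hsrc_V : forall v (h : src v = v) (g : ggrp v), tr ggrp h (hsrc v g) = g;
  hbar_V : forall v (h : bar v = v) (g : ggrp v), tr ggrp h (hbar v g) = g;
  gconn : connected ggraph }.
Arguments ggrp : clear implicits.
Arguments hsrc : clear implicits.
Arguments hbar : clear implicits.

Definition hplus (X : GoG) (x : X) (g : ggrp X x) : ggrp X (tgt x) :=
  hsrc X (bar x) (hbar X x g).

Inductive letter (X : GoG) : Type :=
  | LG (v : X) (g : ggrp X v)
  | LE (x : X).
Arguments LG {X} v g.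
Arguments LE {X} x.

(* l is a well-formed word from v to w (composition left to right) *)
Fixpoint wf (X : GoG) (v : X) (l : list (letter X)) (w : X) : Prop :=
  match l with
  | [] => v = w /\ isV v
  | LG u _ :: l' => isV u /\ v = u /\ wf u l' w
  | LE x :: l' => v = src x /\ wf (tgt x) l' w
  end.

Inductive wbasic (X : GoG) : list (letter X) -> list (letter X) -> Prop :=
  | wb_mul : forall (v : X) (g h : ggrp X v), wbasic [LG v g; LG v h] [LG v (gmul g h)]
  | wb_one : forall (v : X), wbasic [LG v (gone (ggrp X v))] []
  | wb_vert : forall (v : X), isV v -> wbasic [LE v] []
  | wb_inv : forall (x : X), wbasic [LE x; LE (bar x)] []
  | wb_edge : forall (x : X) (g : ggrp X x),
      wbasic [LG (src x) (hsrc X x g); LE x] [LE x; LG (tgt x) (hplus g)].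

Definition wstep (X : GoG) (v w : X) (l l' : list (letter X)) : Prop :=
  exists l1 p q l2 (a b : X),
    l = l1 ++ p ++ l2 /\ l' = l1 ++ q ++ l2 /\ wbasic p q /\
    wf v l1 a /\ wf a p b /\ wf a q b /\ wf b l2 w.

Definition wequiv (X : GoG) (v w : X) : list (letter X) -> list (letter X) -> Prop :=
  clos_refl_sym_trans _ (wstep v w).

Definition lsrc (Y : GoG) (B : Graph) (f : GMor B Y) (z : B)
  (g : ggrp Y (f z)) : ggrp Y (f (src z)) :=
  tr (ggrp Y) (eq_sym (gm_src f z)) (hsrc Y (f z) g).
Definition lbar (Y : GoG) (B : Graph) (f : GMor B Y) (z : B)
  (g : ggrp Y (f z)) : ggrp Y (f (bar z)) :=
  tr (ggrp Y) (eq_sym (gm_bar f z)) (hbar Y (f z) g).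

Arguments lsrc {Y B} f z g.
Arguments lbar {Y B} f z g.
Unset Implicit Arguments.
Record GoB (Y X : GoG) := {
  bgraph :> Graph;
  lam : GMor bgraph Y;
  rho : GMor bgraph X;
  bset : forall z : bgraph, Biset (ggrp Y (lam z)) (ggrp X (rho z));
  bsrc : forall z, bset z -> bset (src z);
  bbar : forall z, bset z -> bset (bar z);
  bsrc_cong : forall z g (b : bset z) h,
      bsrc z (lact g (ract b h))
      = lact (lsrc lam z g) (ract (bsrc z b) (lsrc rho z h));
  bbar_cong : forall z g (b : bset z) h,
      bbar z (lact g (ract b h))
      = lact (lbar lam z g) (ract (bbar z b) (lbar rho z h));
  bbar_bar : forall z (b : bset z),
      tr (fun z => bcar (bset z)) (bar_bar z) (bbar (bar z) (bbar z b)) = b;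
  bsrc_V : forall z (h : src z = z) (b : bset z),
      tr (fun z => bcar (bset z)) h (bsrc z b) = b;
  bbar_V : forall z (h : bar z = z) (b : bset z),
      tr (fun z => bcar (bset z)) h (bbar z b) = b }.

Set Implicit Arguments.
Arguments lam {Y X} g : rename.
Arguments rho {Y X} g : rename.
Arguments bset {Y X} g z : rename.
Arguments bsrc {Y X} g z _ : rename.
Arguments bbar {Y X} g z _ : rename.

Section GoBdefs.
Variables (Y X : GoG) (B : GoB Y X).

Definition bplus (z : B) (b : bset B z) : bset B (tgt z) :=
  bsrc B (bar z) (bbar B z b).

(* domain of the map  \bigsqcup_{e in rho^-1(f), e^- = v} G_{lam v} (x)_{G_{lam e}} B_e -> B_v *)
Definition fib_dom (v : B) (f : X) : Type :=
  { t : { e : B & (ggrp Y (lam B v) * bset B e)%type } |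
      rho B (projT1 t) = f /\ src (projT1 t) = v }.

Definition fib_hv (v : B) (f : X) (t : fib_dom v f) : src (projT1 (proj1_sig t)) = v :=
  proj2 (proj2_sig t).

Definition fib_img (v : B) (f : X) (t : fib_dom v f)
  (k : ggrp Y (lam B (projT1 (proj1_sig t)))) : ggrp Y (lam B v) :=
  tr (fun z => gcar (ggrp Y (lam B z))) (fib_hv t) (lsrc (lam B) _ k).

Arguments fib_img {v f} t k.
Definition fib_map (v : B) (f : X) (t : fib_dom v f) : bset B v :=
  lact (fst (projT2 (proj1_sig t)))
    (tr (fun z => bcar (bset B z)) (fib_hv t) (bsrc B _ (snd (projT2 (proj1_sig t))))).

Arguments fib_map {v f} t.
(* balanced tensor relation (g k^-, b) ~ (g, k b) *)
Definition fib_tens (v : B) (f : X) (t t' : fib_dom v f) : Prop :=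
  exists k : ggrp Y (lam B (projT1 (proj1_sig t))),
    existT (fun e => (ggrp Y (lam B v) * bset B e)%type) (projT1 (proj1_sig t))
      (fst (projT2 (proj1_sig t)), lact k (snd (projT2 (proj1_sig t))))
    = existT (fun e => (ggrp Y (lam B v) * bset B e)%type) (projT1 (proj1_sig t'))
      (gmul (fst (projT2 (proj1_sig t'))) (fib_img t k), snd (projT2 (proj1_sig t'))).

Definition left_fibrant : Prop :=
  simplicial (rho B) /\
  forall (v : B) (f : X), isV v -> ~ isV f -> src f = rho B v ->
    (* the induced map on the tensor-product quotient is a bijection *)
    (forall t t' : fib_dom v f, fib_map t = fib_map t' ->
        clos_refl_sym_trans _ (@fib_tens v f) t t') /\
    (forall b : bset B v, exists t : fib_dom v f, fib_map t = b).

Definition left_free : Prop :=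
  left_fibrant /\ forall z : B, left_free_set (bset B z).

Record fbraw := FBR {
  fz : B;
  fq : list (letter Y);
  fb : bset B fz;
  fp : list (letter X) }.
Arguments FBR : clear implicits.

Variables (dag : Y) (st : X).

Definition fbvalid (e : fbraw) : Prop :=
  isV (fz e) /\ wf dag (fq e) (lam B (fz e)) /\ wf (rho B (fz e)) (fp e) st.

Inductive fbbasic : fbraw -> fbraw -> Prop :=
  | fb_wq : forall z q q' b p, wequiv dag (lam B z) q q' ->
      fbbasic (FBR z q b p) (FBR z q' b p)
  | fb_wp : forall z q b p p', wequiv (rho B z) st p p' ->
      fbbasic (FBR z q b p) (FBR z q b p')
  | fb_tl : forall z q (g : ggrp Y (lam B z)) b p,
      fbbasic (FBR z (q ++ [LG (lam B z) g]) b p) (FBR z q (lact g b) p)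
  | fb_tr : forall z q b (h : ggrp X (rho B z)) p,
      fbbasic (FBR z q (ract b h) p) (FBR z q b (LG (rho B z) h :: p))
  | fb_edge : forall (z : B) q (b : bset B z) p, ~ isV z ->
      fbbasic (FBR (src z) q (bsrc B z b) p)
              (FBR (tgt z) (q ++ [LE (lam B z)]) (bplus b) (LE (bar (rho B z)) :: p)).

Definition fbstep (e e' : fbraw) : Prop := fbvalid e /\ fbvalid e' /\ fbbasic e e'.

Definition fbequiv : fbraw -> fbraw -> Prop := clos_refl_sym_trans _ fbstep.

Definition fbact (r : list (letter Y)) (e : fbraw) : fbraw :=
  FBR (fz e) (r ++ fq e) (fb e) (fp e).

Definition fb_left_free : Prop :=
  forall r e, wf dag r dag -> fbvalid e -> fbequiv (fbact r e) e -> wequiv dag dag r [].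

Definition fbelt : Type := { e : fbraw | fbvalid e }.
Definition fb_lorbit (e e' : fbelt) : Prop :=
  exists r, wf dag r dag /\ fbequiv (fbact r (proj1_sig e)) (proj1_sig e').
Definition fb_orbits : Type := quot fb_lorbit.

Definition fib_elt : Type :=
  { zb : { z : B & bset B z } | rho B (projT1 zb) = st }.
Definition fib_lorbit (x y : fib_elt) : Prop :=
  exists g : ggrp Y (lam B (projT1 (proj1_sig x))),
    existT (fun z => bcar (bset B z)) (projT1 (proj1_sig x))
           (lact g (projT2 (proj1_sig x)))
    = proj1_sig y.
Definition fib_orbits : Type := quot fib_lorbit.

End GoBdefs.

(* Left-fibrancy lets one push every path of pi_1(X) through an element of a biset:
   a group letter acts on the right, and an edge letter f at b in B_v is absorbed by
   writing b = g b_e^- for an edge e over f, which emits the letters g, lam(e) on the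
   left and continues with b_e^+.  Since the decomposition b = g b_e^- is unique up to
   the balanced tensor relation, the result s (x) b' of pushing q (x) b (x) p, viewed in
   pi_1(Y,dag,lam z') (x) B_z', is invariant under every defining relation of
   pi_1(B,dag,st); its vertex z' lies over st.  Hence the left orbits of pi_1(B,dag,st)
   correspond to those of the B_z with rho z = st (the pi_1(Y) part is absorbed by the
   left action), and a path r with r q (x) b (x) p = q (x) b (x) p pushes to
   r q s (x) b' = q s (x) b', which by freeness of B_z' forces r = 1. *)

From Stdlib Require Import List Relations Eqdep ProofIrrelevance FunctionalExtensionality
  PropExtensionality Classical ClassicalEpsilon Program.Equality.
Import ListNotations.
Set Implicit Arguments.
Unset Strict Implicit.

Section GroupFacts.
Variable G : Grp.

Lemma gmul_cancel_l (a b c : G) : gmul a b = gmul a c -> b = c.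
Proof.
  intro H. rewrite <- (gmul1l b), <- (gmul1l c), <- (gmulVl a), <- !gmulA, H. reflexivity.
Qed.

Lemma gmul_idem_one (a : G) : gmul a a = a -> a = gone G.
Proof. intro H. apply gmul_cancel_l with a. rewrite H, gmul1r. reflexivity. Qed.

Lemma ginv_involutive (a : G) : ginv (ginv a) = a.
Proof. apply gmul_cancel_l with (ginv a). rewrite gmulVr, gmulVl. reflexivity. Qed.

End GroupFacts.

Lemma hom_one (G H : Grp) (f : Hom G H) : f (gone G) = gone H.
Proof. apply gmul_idem_one. rewrite <- hmul, gmul1l. reflexivity. Qed.

Lemma hom_inv (G H : Grp) (f : Hom G H) (a : G) : f (ginv a) = ginv (f a).
Proof. apply gmul_cancel_l with (f a). rewrite <- hmul, !gmulVr. apply hom_one. Qed.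

Lemma tr_gone (A : Type) (P : A -> Grp) x y (h : x = y) :
  tr (fun z => gcar (P z)) h (gone (P x)) = gone (P y).
Proof. destruct h. reflexivity. Qed.

Lemma tr_ginv (A : Type) (P : A -> Grp) x y (h : x = y) (a : P x) :
  tr (fun z => gcar (P z)) h (ginv a) = ginv (tr (fun z => gcar (P z)) h a).
Proof. destruct h. reflexivity. Qed.

Lemma tr_sym_eq (A : Type) (P : A -> Type) a b (H : a = b) (u : P a) (v : P b) :
  tr P H u = v -> u = tr P (eq_sym H) v.
Proof. destruct H. auto. Qed.

Section GraphFacts.
Variable G : Graph.

Lemma isV_src (x : G) : isV (src x).
Proof. apply src_src. Qed.

Lemma isV_tgt (x : G) : isV (tgt x).
Proof. apply src_src. Qed.

Lemma bar_vertex (x : G) : isV x -> bar x = x.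
Proof. intro H. symmetry. apply vert_iff. symmetry. exact H. Qed.

Lemma tgt_vertex (x : G) : isV x -> tgt x = x.
Proof. intro H. unfold tgt. rewrite bar_vertex by exact H. exact H. Qed.

Lemma tgt_bar (x : G) : tgt (bar x) = src x.
Proof. unfold tgt. rewrite bar_bar. reflexivity. Qed.

Lemma isV_bar (x : G) : isV (bar x) -> isV x.
Proof. intro H. rewrite <- (bar_bar x). rewrite bar_vertex by exact H. exact H. Qed.

End GraphFacts.

Lemma gm_tgt (A C : Graph) (f : GMor A C) (x : A) : f (tgt x) = tgt (f x).
Proof. unfold tgt. rewrite gm_src, gm_bar. reflexivity. Qed.

Lemma gm_isV (A C : Graph) (f : GMor A C) (x : A) : isV x -> isV (f x).
Proof. unfold isV. intro H. rewrite <- gm_src, H. reflexivity. Qed.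

Section Words.
Variable X : GoG.

Lemma wf_isV (v w : X) l : wf v l w -> isV v.
Proof.
  destruct l as [|[u g|x] l]; simpl.
  - tauto.
  - intros [? [-> _]]; auto.
  - intros [-> _]. apply isV_src.
Qed.

Lemma wf_isV_end (v w : X) l : wf v l w -> isV w.
Proof.
  revert v. induction l as [|[u g|x] l IH]; simpl; intros v.
  - intros [-> ?]; auto.
  - intros [_ [_ H]]; eauto.
  - intros [_ H]; eauto.
Qed.

Lemma wf_app (v w : X) l1 l2 : wf v (l1 ++ l2) w <-> exists m, wf v l1 m /\ wf m l2 w.
Proof.
  revert v. induction l1 as [|[u g|x] l IH]; simpl; intros v.
  - split.
    + intro H. exists v. split; [split; [reflexivity | eapply wf_isV; eauto] | exact H].
    + intros [m [[-> _] H]]. exact H.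
  - split.
    + intros [? [? H]]. apply IH in H. destruct H as [m [? ?]]. exists m. tauto.
    + intros [m [[? [? ?]] ?]]. repeat split; auto. apply IH. eauto.
  - split.
    + intros [? H]. apply IH in H. destruct H as [m [? ?]]. exists m. tauto.
    + intros [m [[? ?] ?]]. split; auto. apply IH. eauto.
Qed.

Lemma wf_cat (v m w : X) l1 l2 : wf v l1 m -> wf m l2 w -> wf v (l1 ++ l2) w.
Proof. intros. apply wf_app. eauto. Qed.

Lemma wstep_wf (v w : X) l l' : wstep v w l l' -> wf v l w /\ wf v l' w.
Proof.
  intros (l1 & p & q & l2 & a & b & -> & -> & _ & H1 & H2 & H3 & H4).
  split; eapply wf_cat; eauto; eapply wf_cat; eauto.
Qed.

Lemma wequiv_wf (v w : X) l l' : wequiv v w l l' -> (wf v l w <-> wf v l' w).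
Proof.
  intro H. induction H; try tauto. apply wstep_wf in H. tauto.
Qed.

Lemma wequiv_app_r (v m w : X) l l' r :
  wequiv v m l l' -> wf m r w -> wequiv v w (l ++ r) (l' ++ r).
Proof.
  intros H Hr. induction H as [l l' Hs | | |];
    [| apply rst_refl | apply rst_sym | eapply rst_trans]; eauto.
  apply rst_step. destruct Hs as (l1 & p & q & l2 & a & b & -> & -> & Hb & H1 & H2 & H3 & H4).
  exists l1, p, q, (l2 ++ r), a, b. rewrite <- !app_assoc. repeat split; auto.
  eapply wf_cat; eauto.
Qed.

Lemma wequiv_app_l (u v w : X) l l' r :
  wf u r v -> wequiv v w l l' -> wequiv u w (r ++ l) (r ++ l').
Proof.
  intros Hr H. induction H as [l l' Hs | | |];
    [| apply rst_refl | apply rst_sym | eapply rst_trans]; eauto.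
  apply rst_step. destruct Hs as (l1 & p & q & l2 & a & b & -> & -> & Hb & H1 & H2 & H3 & H4).
  exists (r ++ l1), p, q, l2, a, b. rewrite <- !app_assoc. repeat split; auto.
  eapply wf_cat; eauto.
Qed.

Lemma wequiv_basic (a b : X) p q : wbasic p q -> wf a p b -> wf a q b -> wequiv a b p q.
Proof.
  intros Hb Hp Hq. apply rst_step. exists [], p, q, [], a, b.
  rewrite !app_nil_r. pose proof (wf_isV Hp). pose proof (wf_isV_end Hp).
  repeat split; auto.
Qed.

Lemma wequiv_mul (v : X) (g h : ggrp X v) :
  isV v -> wequiv v v [LG v g; LG v h] [LG v (gmul g h)].
Proof. intro. apply wequiv_basic; [constructor | simpl; tauto ..]. Qed.

Lemma wequiv_one (v : X) : isV v -> wequiv v v [LG v (gone _)] [].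
Proof. intro. apply wequiv_basic; [constructor | simpl; tauto ..]. Qed.

Lemma wequiv_bar_r (x : X) : wequiv (src x) (src x) [LE x; LE (bar x)] [].
Proof.
  apply wequiv_basic; [constructor | simpl; rewrite tgt_bar |];
    repeat split; auto using isV_src, isV_tgt.
Qed.

Lemma wequiv_edge_one_bar (x : X) :
  wequiv (src x) (src x) [LE x; LG (tgt x) (gone _); LE (bar x)] [].
Proof.
  eapply rst_trans; [| apply wequiv_bar_r].
  apply (wequiv_app_l (r := [LE x]) (l := [_; _]) (l' := [_]) (v := tgt x));
    [simpl; auto using isV_tgt |].
  apply (wequiv_app_r (l := [_]) (l' := []) (r := [_]) (m := tgt x));
    [apply wequiv_one, isV_tgt | simpl; rewrite tgt_bar; auto using isV_src].
Qed.

Lemma wequiv_app_one (v a : X) w : wf v w a -> wequiv v a w (w ++ [LG a (gone _)]).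
Proof.
  intro H. apply rst_sym. rewrite <- (app_nil_r w) at 2.
  apply wequiv_app_l with (v := a); auto. apply wequiv_one, (wf_isV_end H).
Qed.

Lemma wequiv_app_mul (v a : X) w (g h : ggrp X a) : wf v w a ->
  wequiv v a (w ++ [LG a g; LG a h]) (w ++ [LG a (gmul g h)]).
Proof. intro H. apply wequiv_app_l with (v := a); auto. apply wequiv_mul, (wf_isV_end H). Qed.

Definition letter_inv (a : letter X) : letter X :=
  match a with LG v g => LG v (ginv g) | LE x => LE (bar x) end.
Definition word_inv (l : list (letter X)) := rev (map letter_inv l).

Lemma wf_word_inv (v w : X) l : wf v l w -> wf w (word_inv l) v.
Proof.
  revert v. unfold word_inv. induction l as [|[u g|x] l IH]; intros v; simpl.
  - intros [-> ?]. simpl. auto.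
  - intros [Hu [-> H]]. eapply wf_cat; [apply IH; eauto | simpl; auto].
  - intros [-> H]. eapply wf_cat; [apply IH; eauto |].
    simpl. repeat split; auto using tgt_bar, isV_tgt.
Qed.

Lemma word_inv_involutive l : word_inv (word_inv l) = l.
Proof.
  unfold word_inv. rewrite map_rev, rev_involutive, map_map.
  induction l as [|[u g|x] l IH]; simpl; rewrite ?IH, ?ginv_involutive, ?bar_bar; reflexivity.
Qed.

Lemma wequiv_word_inv_r (v w : X) l : wf v l w -> wequiv v v (l ++ word_inv l) [].
Proof.
  revert v. unfold word_inv. induction l as [|[u g|x] l IH]; intros v; simpl.
  - intros _. apply rst_refl.
  - intros [Hu [-> H]]. rewrite app_assoc.
    change (LG u g :: (l ++ rev (map letter_inv l)) ++ [LG u (ginv g)])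
      with ([LG u g] ++ (l ++ rev (map letter_inv l)) ++ [LG u (ginv g)]).
    eapply rst_trans.
    { apply (wequiv_app_l (v := u)); [simpl; auto |].
      apply (wequiv_app_r (m := u)); [apply IH; auto | simpl; auto]. }
    simpl. eapply rst_trans; [apply wequiv_mul; auto |].
    rewrite gmulVr. apply wequiv_one; auto.
  - intros [-> H]. rewrite app_assoc.
    change (LE x :: (l ++ rev (map letter_inv l)) ++ [LE (bar x)])
      with ([LE x] ++ (l ++ rev (map letter_inv l)) ++ [LE (bar x)]).
    eapply rst_trans.
    { apply (wequiv_app_l (v := tgt x)); [simpl; auto using isV_tgt |].
      apply (wequiv_app_r (m := tgt x)); [apply IH; auto |].
      simpl. repeat split; auto using tgt_bar, isV_tgt. }
    apply wequiv_bar_r.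
Qed.

Lemma wequiv_word_inv_l (v w : X) l : wf v l w -> wequiv w w (word_inv l ++ l) [].
Proof.
  intro H. pose proof (wequiv_word_inv_r (wf_word_inv H)) as C.
  rewrite word_inv_involutive in C. exact C.
Qed.

Lemma wequiv_cancel_r (a v w : X) w1 w2 l : wf a w1 v -> wf a w2 v -> wf v l w ->
  wequiv a w (w1 ++ l) (w2 ++ l) -> wequiv a v w1 w2.
Proof.
  intros H1 H2 Hl E.
  assert (E' : wequiv a v ((w1 ++ l) ++ word_inv l) ((w2 ++ l) ++ word_inv l))
    by (apply (wequiv_app_r (m := w)); [exact E | apply wf_word_inv; auto]).
  rewrite <- !app_assoc in E'.
  eapply rst_trans; [| eapply rst_trans; [exact E' |]].
  - rewrite <- (app_nil_r w1) at 1. apply wequiv_app_l with (v := v); auto.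
    apply rst_sym. eapply wequiv_word_inv_r; eauto.
  - rewrite <- (app_nil_r w2) at 2.
    apply wequiv_app_l with (v := v); auto. eapply wequiv_word_inv_r; eauto.
Qed.

Lemma reach_word (v w : X) : reach v w -> isV v -> exists l, wf v l w.
Proof.
  intros H Hv. induction H as [| e _ [l Hl]].
  - exists []. simpl. auto.
  - exists (l ++ [LE e]). eapply wf_cat; [exact Hl |]. simpl. auto using isV_tgt.
Qed.

End Words.

Section Quotients.
Variables (T : Type) (R : T -> T -> Prop).

Definition qclass (a : T) : quot R :=
  exist _ (fun u => clos_refl_sym_trans T R a u) (ex_intro _ a (fun u => iff_refl _)).

Definition qrep (P : quot R) : T :=
  proj1_sig (constructive_indefinite_description _ (proj2_sig P)).

Lemma qrep_spec (P : quot R) y : proj1_sig P y <-> clos_refl_sym_trans T R (qrep P) y.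
Proof. unfold qrep. destruct (constructive_indefinite_description _ _). auto. Qed.

Lemma quot_ext (P Q : quot R) : (forall y, proj1_sig P y <-> proj1_sig Q y) -> P = Q.
Proof.
  destruct P as [P HP], Q as [Q HQ]. simpl. intro H.
  assert (P = Q) as <-
    by (apply functional_extensionality; intro; apply propositional_extensionality; auto).
  f_equal. apply proof_irrelevance.
Qed.

Lemma qclass_eq (a b : T) : clos_refl_sym_trans T R a b -> qclass a = qclass b.
Proof.
  intro H. apply quot_ext. simpl. intro y.
  split; intro H'; eapply rst_trans; eauto using rst_sym.
Qed.

Lemma qclass_inj (a b : T) : qclass a = qclass b -> clos_refl_sym_trans T R a b.
Proof.
  intro H. pose proof (f_equal (fun P => proj1_sig P b) H) as E. simpl in E.
  rewrite E. apply rst_refl.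
Qed.

Lemma qclass_qrep (P : quot R) : P = qclass (qrep P).
Proof. apply quot_ext. intro y. apply qrep_spec. Qed.

End Quotients.

Section Letters.
Variable Z : GoG.
Notation trZ := (tr (fun z => gcar (ggrp Z z))).

Lemma LG_tr (a b : Z) (H : a = b) (u : ggrp Z a) : LG b (trZ H u) = LG a u.
Proof. destruct H. reflexivity. Qed.

Lemma LG_hsrc_tr (a b : Z) (H : a = b) (u : ggrp Z a) :
  LG (src b) (hsrc Z b (trZ H u)) = LG (src a) (hsrc Z a u).
Proof. destruct H. reflexivity. Qed.

Lemma LG_inj (a : Z) (u u' : ggrp Z a) : LG a u = LG a u' -> u = u'.
Proof. intro H. injection H as H. apply inj_pair2 in H. exact H. Qed.

Lemma LG_hsrc_vertex (x : Z) (g : ggrp Z x) : isV x ->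
  LG (src x) (hsrc Z x g) = LG (tgt x) (hplus g).
Proof.
  intro Hx. pose proof (bar_vertex Hx) as Hb.
  assert (Hu : hbar Z x g = trZ (eq_sym Hb) g)
    by (apply (tr_sym_eq (P := fun z => gcar (ggrp Z z))), hbar_V).
  unfold hplus, tgt. now rewrite Hu, (LG_hsrc_tr (eq_sym Hb)).
Qed.

Variables (C : Graph) (f : GMor C Z).

Lemma lsrc_gone (z : C) : lsrc f z (gone _) = gone _.
Proof. unfold lsrc. rewrite hom_one. apply tr_gone. Qed.

Lemma lbar_gone (z : C) : lbar f z (gone _) = gone _.
Proof. unfold lbar. rewrite hom_one. apply tr_gone. Qed.

Lemma lsrc_ginv (z : C) (g : ggrp Z (f z)) : lsrc f z (ginv g) = ginv (lsrc f z g).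
Proof. unfold lsrc. rewrite hom_inv. apply (tr_ginv (P := ggrp Z)). Qed.

Lemma LG_lsrc (z : C) (k : ggrp Z (f z)) :
  LG (f (src z)) (lsrc f z k) = LG (src (f z)) (hsrc Z (f z) k).
Proof. apply LG_tr. Qed.

Lemma LG_lplus (z : C) (k : ggrp Z (f z)) :
  LG (f (tgt z)) (lsrc f (bar z) (lbar f z k)) = LG (tgt (f z)) (hplus k).
Proof. unfold lsrc, lbar, tgt. rewrite LG_tr, LG_hsrc_tr. reflexivity. Qed.

Lemma wequiv_lsrc_edge (e : C) (k : ggrp Z (f e)) :
  wequiv (f (src e)) (f (tgt e))
    [LG (f (src e)) (lsrc f e k); LE (f e)]
    [LE (f e); LG (f (tgt e)) (lsrc f (bar e) (lbar f e k))].
Proof.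
  rewrite LG_lsrc, LG_lplus, gm_src, gm_tgt.
  apply wequiv_basic; [constructor | simpl; repeat split; auto using isV_src, isV_tgt ..].
Qed.

End Letters.

Section Bisets.
Variables (Y X : GoG) (B : GoB Y X) (dag : Y).

Notation BS z := (bcar (bset B z)).
Notation trB := (tr (fun z => bcar (bset B z))).
Notation trG := (tr (fun z => gcar (ggrp Y (lam B z)))).

Lemma bsrc_lact (z : B) g (b : BS z) :
  bsrc B z (lact g b) = lact (lsrc (lam B) z g) (bsrc B z b).
Proof. rewrite <- (ract1 b) at 1. rewrite bsrc_cong, lsrc_gone, ract1. reflexivity. Qed.

Lemma bbar_lact (z : B) g (b : BS z) :
  bbar B z (lact g b) = lact (lbar (lam B) z g) (bbar B z b).
Proof. rewrite <- (ract1 b) at 1. rewrite bbar_cong, lbar_gone, ract1. reflexivity. Qed.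

Lemma bsrc_ract (z : B) h (b : BS z) :
  bsrc B z (ract b h) = ract (bsrc B z b) (lsrc (rho B) z h).
Proof. rewrite <- (lact1 b) at 1. rewrite <- lract, bsrc_cong, lsrc_gone, lact1. reflexivity. Qed.

Lemma bbar_ract (z : B) h (b : BS z) :
  bbar B z (ract b h) = ract (bbar B z b) (lbar (rho B) z h).
Proof. rewrite <- (lact1 b) at 1. rewrite <- lract, bbar_cong, lbar_gone, lact1. reflexivity. Qed.

Lemma bplus_lact (z : B) g (b : BS z) :
  bplus (lact g b) = lact (lsrc (lam B) (bar z) (lbar (lam B) z g)) (bplus b).
Proof. unfold bplus. rewrite bbar_lact, bsrc_lact. reflexivity. Qed.

Lemma bplus_ract (z : B) h (b : BS z) :
  bplus (ract b h) = ract (bplus b) (lsrc (rho B) (bar z) (lbar (rho B) z h)).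
Proof. unfold bplus. rewrite bbar_ract, bsrc_ract. reflexivity. Qed.

Lemma trB_lact z1 z2 (H : z1 = z2) g (c : BS z1) :
  trB H (lact g c) = lact (trG H g) (trB H c).
Proof. destruct H. reflexivity. Qed.

Lemma trB_bsrc (y1 y2 : B) (H : y1 = y2) (c : BS y1) (E : src y1 = src y2) :
  trB E (bsrc B y1 c) = bsrc B y2 (trB H c).
Proof. destruct H. rewrite (UIP_refl _ _ E). reflexivity. Qed.

Lemma bplus_bbar (z : B) (b : BS z) (E : src z = tgt (bar z)) :
  bplus (bbar B z b) = trB E (bsrc B z b).
Proof.
  unfold bplus. rewrite (trB_bsrc (eq_sym (bar_bar z))). f_equal.
  apply (tr_sym_eq (P := fun z => bcar (bset B z))), bbar_bar.
Qed.

(* [tensor_eq z w b z' w' b'] is equality of [w (x) b] and [w' (x) b'] in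
   pi_1(Y, dag, lam z) (x)_{G_{lam z}} B_z. *)
Unset Implicit Arguments.
Inductive tensor_eq : forall z : B, list (letter Y) -> BS z ->
                      forall z' : B, list (letter Y) -> BS z' -> Prop :=
| tensor_eq_intro : forall z w (b : BS z) w' (b' : BS z) (k : ggrp Y (lam B z)),
    wf dag w (lam B z) -> wf dag w' (lam B z) ->
    wequiv dag (lam B z) w' (w ++ [LG (lam B z) k]) -> b = lact k b' ->
    tensor_eq z w b z w' b'.
Set Implicit Arguments.

Lemma tensor_eq_inv z w (b : BS z) w' (b' : BS z) : tensor_eq z w b z w' b' ->
  exists k, wf dag w (lam B z) /\ wf dag w' (lam B z) /\
    wequiv dag (lam B z) w' (w ++ [LG (lam B z) k]) /\ b = lact k b'.
Proof. intro H. dependent destruction H. eauto. Qed.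

Lemma tensor_eq_wf z w (b : BS z) z' w' (b' : BS z') : tensor_eq z w b z' w' b' ->
  wf dag w (lam B z) /\ wf dag w' (lam B z').
Proof. intro H; destruct H; auto. Qed.

Lemma tensor_eq_vertex z w (b : BS z) z' w' (b' : BS z') : tensor_eq z w b z' w' b' -> z = z'.
Proof. intro H; destruct H; auto. Qed.

Lemma tensor_eq_fibre z w (b : BS z) z' w' (b' : BS z') : tensor_eq z w b z' w' b' ->
  exists g : ggrp Y (lam B z'), existT (fun z => BS z) z' (lact g b') = existT _ z b.
Proof. intro H. destruct H as [z w b w' b' k _ _ _ ->]. eauto. Qed.

Lemma tensor_eq_word z w w' (b : BS z) : wf dag w (lam B z) -> wf dag w' (lam B z) ->
  wequiv dag (lam B z) w w' -> tensor_eq z w b z w' b.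
Proof.
  intros H1 H2 E. apply tensor_eq_intro with (gone _); auto.
  - eapply rst_trans; [apply rst_sym, E | apply wequiv_app_one; auto].
  - rewrite lact1. reflexivity.
Qed.

Lemma tensor_eq_refl z w (b : BS z) : wf dag w (lam B z) -> tensor_eq z w b z w b.
Proof. intro. apply tensor_eq_word; auto. apply rst_refl. Qed.

Lemma tensor_eq_lact z w (b : BS z) (k : ggrp Y (lam B z)) : wf dag w (lam B z) ->
  tensor_eq z w (lact k b) z (w ++ [LG (lam B z) k]) b.
Proof.
  intro H. apply tensor_eq_intro with k; auto; [| apply rst_refl].
  eapply wf_cat; eauto. simpl. pose proof (wf_isV_end H). auto.
Qed.

Lemma tensor_eq_sym z w (b : BS z) z' w' (b' : BS z') :
  tensor_eq z w b z' w' b' -> tensor_eq z' w' b' z w b.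
Proof.
  intro H. destruct H as [z w b w' b' k H1 H2 E ->].
  pose proof (wf_isV_end H1) as Hv.
  apply tensor_eq_intro with (ginv k); auto.
  - eapply rst_trans; [| apply wequiv_app_r with (m := lam B z); [apply rst_sym, E | simpl; auto]].
    rewrite <- app_assoc. simpl. eapply rst_trans; [apply wequiv_app_one, H1 |].
    eapply rst_trans; [| apply rst_sym, wequiv_app_mul; auto].
    rewrite gmulVr. apply rst_refl.
  - rewrite <- lactM, gmulVl, lact1. reflexivity.
Qed.

Lemma tensor_eq_trans z1 w1 (b1 : BS z1) z2 w2 (b2 : BS z2) z3 w3 (b3 : BS z3) :
  tensor_eq z1 w1 b1 z2 w2 b2 -> tensor_eq z2 w2 b2 z3 w3 b3 -> tensor_eq z1 w1 b1 z3 w3 b3.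
Proof.
  intros H H'. destruct H as [z w b w' b' k H1 H2 E ->].
  destruct H' as [z w'' b'' w3 b3 k' H1' H2' E' ->].
  apply tensor_eq_intro with (gmul k k'); auto.
  - eapply rst_trans; [exact E' |].
    eapply rst_trans; [apply wequiv_app_r with (m := lam B z); [exact E | simpl; auto] |].
    + pose proof (wf_isV_end H1). auto.
    + rewrite <- app_assoc. apply wequiv_app_mul; auto.
  - rewrite lactM. reflexivity.
Qed.

Lemma tensor_eq_tr z1 z2 (H : z1 = z2) w (b : BS z1) :
  wf dag w (lam B z1) -> tensor_eq z1 w b z2 w (trB H b).
Proof. destruct H. apply tensor_eq_refl. Qed.

Lemma tensor_eq_ract z w (b : BS z) w' (b' : BS z) (h : ggrp X (rho B z)) :
  tensor_eq z w b z w' b' -> tensor_eq z w (ract b h) z w' (ract b' h).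
Proof.
  intro H. dependent destruction H.
  apply tensor_eq_intro with k; auto. rewrite lract. reflexivity.
Qed.

(* [push z b p s z' b']: pushing the word [p] of pi_1(X) from [rho z] through [b]
   yields [s (x) b'], where [s] is a word of pi_1(Y) from [lam z] to [lam z']. *)
Unset Implicit Arguments.
Inductive push : forall z : B, BS z -> list (letter X) -> list (letter Y) ->
                 forall z' : B, BS z' -> Prop :=
| push_nil : forall z (b : BS z), push z b [] [] z b
| push_group : forall z (b : BS z) (h : ggrp X (rho B z)) p s z' (b' : BS z'),
    push z (ract b h) p s z' b' -> push z b (LG (rho B z) h :: p) s z' b'
| push_vertex : forall z (b : BS z) p s z' (b' : BS z'), isV (rho B z) ->
    push z b p s z' b' -> push z b (LE (rho B z) :: p) s z' b'
| push_edge : forall (e : B) (be : BS e) (g : ggrp Y (lam B (src e))) p s z' (b' : BS z'),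
    ~ isV (rho B e) -> push (tgt e) (bplus be) p s z' b' ->
    push (src e) (lact g (bsrc B e be)) (LE (rho B e) :: p)
         (LG (lam B (src e)) g :: LE (lam B e) :: s) z' b'.
Set Implicit Arguments.

Lemma push_wf z (b : BS z) p s z' (b' : BS z') : push z b p s z' b' -> isV z ->
  wf (lam B z) s (lam B z') /\ isV z'.
Proof.
  intro H. induction H; intro Hz; auto.
  - simpl. auto using gm_isV.
  - destruct (IHpush (isV_tgt e)) as [IH1 IH2]. simpl.
    rewrite <- gm_tgt. auto using gm_isV, isV_src, gm_src.
Qed.

Lemma push_end z (b : BS z) p s z' (b' : BS z') : push z b p s z' b' ->
  forall w, wf (rho B z) p w -> rho B z' = w.
Proof.
  intro H. induction H; intros w Hw; simpl in Hw; [tauto | apply IHpush ..].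
  - tauto.
  - destruct Hw as [_ Hw]. rewrite tgt_vertex in Hw; auto.
  - rewrite gm_tgt. tauto.
Qed.

Lemma push_app z (b : BS z) l s z' (b' : BS z') : push z b l s z' b' ->
  forall l1 l2, l = l1 ++ l2 ->
  exists s1 zm (bm : BS zm) s2, push z b l1 s1 zm bm /\ push zm bm l2 s2 z' b' /\ s = s1 ++ s2.
Proof.
  intro H. induction H; intros l1 l2 El.
  - destruct l1, l2; try discriminate. exists [], z, b, []. repeat split; constructor.
  - destruct l1 as [|a l1]; simpl in El.
    + subst l2. exists [], z, b, s. repeat split; constructor; auto.
    + injection El as <- E2. destruct (IHpush _ _ E2) as (s1 & zm & bm & s2 & ? & ? & ->).
      exists s1, zm, bm, s2. repeat split; auto. constructor; auto.
  - destruct l1 as [|a l1]; simpl in El.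
    + subst l2. exists [], z, b, s. repeat split; constructor; auto.
    + injection El as <- E2. destruct (IHpush _ _ E2) as (s1 & zm & bm & s2 & ? & ? & ->).
      exists s1, zm, bm, s2. repeat split; auto. constructor; auto.
  - destruct l1 as [|a l1]; simpl in El.
    + subst l2. eexists [], _, _, _. repeat split; constructor; auto.
    + injection El as <- E2. destruct (IHpush _ _ E2) as (s1 & zm & bm & s2 & ? & ? & ->).
      eexists _, zm, bm, s2. repeat split; [constructor | ..]; eauto.
Qed.

Lemma push_inv_nil z (b : BS z) s z' (b' : BS z') : push z b [] s z' b' ->
  s = [] /\ exists H : z = z', trB H b = b'.
Proof.
  intro H. remember [] as l. destruct H; try discriminate. split; auto. exists eq_refl. reflexivity.
Qed.

Lemma push_inv_group z (b : BS z) u (h : ggrp X u) p s z' (b' : BS z') :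
  push z b (LG u h :: p) s z' b' ->
  exists h' : ggrp X (rho B z), LG u h = LG (rho B z) h' /\ push z (ract b h') p s z' b'.
Proof.
  intro H. remember (LG u h :: p) as l. destruct H; try discriminate.
  pose proof Heql as E0. injection Heql as E1 E2. subst p0. exists h0. split; [congruence | auto].
Qed.

Lemma push_inv_group_rho z (b : BS z) (h : ggrp X (rho B z)) p s z' (b' : BS z') :
  push z b (LG (rho B z) h :: p) s z' b' -> push z (ract b h) p s z' b'.
Proof.
  intro H. apply push_inv_group in H as (h' & E & H). apply LG_inj in E. subst h'. exact H.
Qed.

Lemma push_inv_edge z (b : BS z) x p s z' (b' : BS z') :
  push z b (LE x :: p) s z' b' ->
  (x = rho B z /\ isV (rho B z) /\ push z b p s z' b') \/
  (exists e (Hs : src e = z) (be : BS e) (g : ggrp Y (lam B (src e))) s0,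
     rho B e = x /\ ~ isV (rho B e) /\ b = trB Hs (lact g (bsrc B e be)) /\
     s = LG (lam B (src e)) g :: LE (lam B e) :: s0 /\ push (tgt e) (bplus be) p s0 z' b').
Proof.
  intro H. remember (LE x :: p) as l. destruct H; try discriminate;
    injection Heql as E1 E2; subst; [left | right; exists e, eq_refl, be, g, s]; auto.
Qed.

Lemma rho_edge_not_src (e : B) : ~ isV (rho B e) -> rho B e <> rho B (src e).
Proof. intros H E. apply H. unfold isV. rewrite <- gm_src. symmetry. exact E. Qed.

Section Fibrant.
Hypothesis fibrant : left_fibrant B.

Definition fd_edge v f (t : fib_dom (B:=B) v f) : B := projT1 (proj1_sig t).
Definition fd_coef v f (t : fib_dom (B:=B) v f) : ggrp Y (lam B v) := fst (projT2 (proj1_sig t)).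
Definition fd_elt v f (t : fib_dom (B:=B) v f) : BS (fd_edge t) := snd (projT2 (proj1_sig t)).

Definition fib_point v f (e : B) (g : ggrp Y (lam B v)) (be : BS e)
  (Hr : rho B e = f) (Hs : src e = v) : fib_dom (B:=B) v f :=
  exist _ (existT (fun e0 => (ggrp Y (lam B v) * BS e0)%type) e (g, be)) (conj Hr Hs).

Lemma fib_map_point v f (e : B) g (be : BS e) (Hr : rho B e = f) (Hs : src e = v) :
  fib_map (fib_point g be Hr Hs) = lact g (trB Hs (bsrc B e be)).
Proof.
  unfold fib_map, fib_hv, fib_point. simpl. rewrite (proof_irrelevance _ (proj2 _) Hs).
  reflexivity.
Qed.

Lemma edge_decomposition (v : B) (x : X) (b : BS v) : isV v -> ~ isV x -> src x = rho B v ->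
  exists (e : B) (Hs : src e = v) (g : ggrp Y (lam B v)) (be : BS e),
    rho B e = x /\ b = lact g (trB Hs (bsrc B e be)).
Proof.
  intros Hv Hx Ex. destruct (proj2 fibrant v x Hv Hx Ex) as [_ Hsurj].
  destruct (Hsurj b) as [[[e [g be]] [Hr Hs]] <-].
  exists e, Hs, g, be. split; [exact Hr |]. rewrite <- fib_map_point with (Hr := Hr). reflexivity.
Qed.

Lemma push_exists p : forall z (b : BS z) w, isV z -> wf (rho B z) p w ->
  exists s z' (b' : BS z'), push z b p s z' b'.
Proof.
  induction p as [|[u h|x] p IH]; intros z b w Hz Hw; simpl in Hw.
  - eexists _, _, _. constructor.
  - destruct Hw as [_ [<- Hw]]. destruct (IH z (ract b h) w Hz Hw) as (s & z' & b' & H).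
    eexists _, _, _. constructor. eauto.
  - destruct Hw as [Ex Hw]. destruct (classic (isV x)) as [Hx | Hx].
    + assert (x = rho B z) as -> by (rewrite Ex; symmetry; exact Hx).
      rewrite tgt_vertex in Hw by auto.
      destruct (IH z b w Hz Hw) as (s & z' & b' & H).
      eexists _, _, _. apply push_vertex; eauto.
    + destruct (edge_decomposition b Hz Hx (eq_sym Ex)) as (e & <- & g & be & <- & ->).
      rewrite <- gm_tgt in Hw.
      destruct (IH (tgt e) (bplus be) w (isV_tgt e) Hw) as (s & z' & b' & H).
      eexists _, _, _. apply push_edge; eauto.
Qed.

Lemma fib_tens_edge v f (t t' : fib_dom (B:=B) v f) :
  clos_refl_sym_trans _ (@fib_tens _ _ B v f) t t' -> fd_edge t = fd_edge t'.
Proof.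
  intro H. induction H; try congruence.
  destruct H as [k Hk]. exact (f_equal (@projT1 _ _) Hk).
Qed.

Lemma tensor_eq_balanced (e : B) (g : ggrp Y (lam B (src e))) (k : ggrp Y (lam B e)) (be : BS e) W :
  wf dag W (lam B (src e)) ->
  tensor_eq (tgt e) (W ++ [LG (lam B (src e)) g; LE (lam B e)]) (bplus (lact k be))
    (tgt e) (W ++ [LG (lam B (src e)) (gmul g (lsrc (lam B) e k)); LE (lam B e)]) (bplus be).
Proof.
  intro HW. assert (Hl : isV (lam B (src e))) by apply gm_isV, isV_src.
  assert (Hedge : wf (lam B (src e)) [LE (lam B e)] (lam B (tgt e)))
    by (simpl; rewrite gm_src, gm_tgt; auto using isV_tgt).
  apply tensor_eq_intro with (lsrc (lam B) (bar e) (lbar (lam B) e k));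
    [eapply wf_cat; [exact HW | simpl; auto] .. | | apply bplus_lact].
  rewrite <- app_assoc. apply wequiv_app_l with (v := lam B (src e)); auto.
  eapply rst_trans.
  { change [LG (lam B (src e)) (gmul g (lsrc (lam B) e k)); LE (lam B e)]
      with ([LG (lam B (src e)) (gmul g (lsrc (lam B) e k))] ++ [LE (lam B e)]).
    apply (wequiv_app_r (m := lam B (src e))); [apply rst_sym, wequiv_mul; auto | exact Hedge]. }
  apply (wequiv_app_l (r := [LG (lam B (src e)) g]) (v := lam B (src e))
    (l := [_; _]) (l' := [_; _])); [simpl; auto |].
  apply wequiv_lsrc_edge.
Qed.

Lemma fib_tens_tensor_eq v f (t t' : fib_dom (B:=B) v f) W :
  clos_refl_sym_trans _ (@fib_tens _ _ B v f) t t' -> wf dag W (lam B v) ->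
  tensor_eq (tgt (fd_edge t)) (W ++ [LG (lam B v) (fd_coef t); LE (lam B (fd_edge t))])
      (bplus (fd_elt t))
    (tgt (fd_edge t')) (W ++ [LG (lam B v) (fd_coef t'); LE (lam B (fd_edge t'))])
      (bplus (fd_elt t')).
Proof.
  intros H HW. induction H as [t t' Ht | t | | ]; eauto using tensor_eq_sym, tensor_eq_trans.
  - destruct t as [[e [g b]] [Hr Hs]], t' as [[e' [g' b']] [Hr' Hs']].
    destruct Ht as [k Hk]. unfold fd_edge, fd_coef, fd_elt, fib_img, fib_hv in *. simpl in *.
    pose proof (f_equal (@projT1 _ _) Hk) as Ee. simpl in Ee. subst e'.
    apply inj_pair2 in Hk. injection Hk as E1 <-. subst v.
    rewrite (UIP_refl _ _ (proj2 _)) in E1. simpl in E1. subst g.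
    apply tensor_eq_sym, tensor_eq_balanced. exact HW.
  - apply tensor_eq_refl. eapply wf_cat; [exact HW |]. pose proof (fib_hv t) as Hs.
    change (src (fd_edge t) = v) in Hs.
    pose proof (wf_isV_end HW). simpl. rewrite <- gm_src, Hs, gm_tgt. auto using isV_tgt.
Qed.

Lemma tensor_eq_edge_step (e1 e2 : B) (Hs : src e2 = src e1)
  (g1 : ggrp Y (lam B (src e1))) (g2 : ggrp Y (lam B (src e2))) (be1 : BS e1) (be2 : BS e2) W W2 :
  ~ isV (rho B e1) -> rho B e2 = rho B e1 ->
  tensor_eq (src e1) W (lact g1 (bsrc B e1 be1)) (src e1) W2 (trB Hs (lact g2 (bsrc B e2 be2))) ->
  tensor_eq (tgt e1) (W ++ [LG (lam B (src e1)) g1; LE (lam B e1)]) (bplus be1)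
            (tgt e2) (W2 ++ [LG (lam B (src e2)) g2; LE (lam B e2)]) (bplus be2).
Proof.
  intros Hn Hr HR. destruct (tensor_eq_inv HR) as (k & HW & HW2 & EW & Eb).
  destruct (proj2 fibrant (src e1) (rho B e1) (isV_src e1) Hn (eq_sym (gm_src _ e1)))
    as [Hinj _].
  pose (t1 := fib_point (v := src e1) (f := rho B e1) g1 be1 eq_refl eq_refl).
  pose (t2 := fib_point (gmul k (trG Hs g2)) be2 Hr Hs).
  (* Both decompositions map to the same element of B_{src e1}; injectivity of the
     fibrancy map relates them by the balanced tensor relation. *)
  assert (Ht : clos_refl_sym_trans _ (@fib_tens _ _ B _ _) t1 t2).
  { apply Hinj. unfold t1, t2. rewrite !fib_map_point. cbn [tr].
    rewrite Eb, trB_lact, lactM. reflexivity. }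
  pose proof (fib_tens_edge Ht) as Ee. cbv [t1 t2 fib_point fd_edge] in Ee. simpl in Ee. subst e2.
  pose proof (fib_tens_tensor_eq Ht HW) as HC. cbv [t1 t2 fib_point fd_edge fd_coef fd_elt] in HC.
  simpl in HC.
  rewrite (UIP_refl _ _ Hs) in HC. simpl in HC.
  assert (Hl : isV (lam B (src e1))) by apply gm_isV, isV_src.
  assert (Hedge : wf (lam B (src e1)) [LE (lam B e1)] (lam B (tgt e1)))
    by (simpl; rewrite gm_src, gm_tgt; auto using isV_tgt).
  eapply tensor_eq_trans; [exact HC |].
  apply tensor_eq_word; [eapply wf_cat; [eassumption | simpl; auto] .. |].
  apply rst_sym. eapply rst_trans.
  { apply (wequiv_app_r (l' := W ++ [LG (lam B (src e1)) k])
      (r := [LG (lam B (src e1)) g2; LE (lam B e1)]) (m := lam B (src e1)));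
      [exact EW | simpl; auto]. }
  rewrite <- app_assoc. apply wequiv_app_l with (v := lam B (src e1)); [exact HW |].
  apply (wequiv_app_r (l := [_; _]) (l' := [_]) (r := [LE (lam B e1)]) (m := lam B (src e1)));
    [apply wequiv_mul; auto | exact Hedge].
Qed.

Lemma tensor_eq_push p : forall z (b : BS z) s z' (b' : BS z') z2 (b2 : BS z2) s2 z2'
  (b2' : BS z2') W W2, push z b p s z' b' -> push z2 b2 p s2 z2' b2' ->
  tensor_eq z W b z2 W2 b2 -> tensor_eq z' (W ++ s) b' z2' (W2 ++ s2) b2'.
Proof.
  induction p as [|[u h|x] p IH]; intros z b s z' b' z2 b2 s2 z2' b2' W W2 H1 H2 HR;
    pose proof (tensor_eq_vertex HR); subst z2.
  - apply push_inv_nil in H1 as [-> [E1 <-]], H2 as [-> [E2 <-]]. subst z' z2'.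
    rewrite !app_nil_r. exact HR.
  - apply push_inv_group in H1 as (h1 & E1 & H1), H2 as (h2 & E2 & H2).
    rewrite E1 in E2. apply LG_inj in E2. subst h2. eauto using tensor_eq_ract.
  - apply push_inv_edge in H1
      as [(Ex & Hv & H1) | (e1 & Hs1 & be1 & g1 & s0 & Hr1 & Hn1 & Hb1 & -> & H1)],
      H2 as [(Ex' & Hv' & H2) | (e2 & Hs2 & be2 & g2 & s02 & Hr2 & Hn2 & Hb2 & -> & H2)].
    + eauto.
    + exfalso. apply (rho_edge_not_src Hn2). congruence.
    + exfalso. apply (rho_edge_not_src Hn1). congruence.
    + subst z b b2 x. simpl in HR.
      change (LG _ g1 :: LE _ :: s0) with ([LG (lam B (src e1)) g1; LE (lam B e1)] ++ s0).
      change (LG _ g2 :: LE _ :: s02) with ([LG (lam B (src e2)) g2; LE (lam B e2)] ++ s02).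
      rewrite !app_assoc. eapply IH; [exact H1 | exact H2 |].
      apply tensor_eq_edge_step with (Hs := Hs2); [exact Hn1 | congruence | exact HR].
Qed.

Lemma push_backtrack (z : B) (b : BS z) p s z' (b' : BS z') W :
  ~ isV (rho B z) -> wf dag W (lam B (src z)) ->
  push (tgt z) (bplus b) (LE (bar (rho B z)) :: p) s z' b' ->
  exists zm W0 s0 (b0 : BS zm), push zm b0 p s0 z' b' /\
    tensor_eq (src z) W (bsrc B z b) zm W0 b0 /\ W ++ LE (lam B z) :: s = W0 ++ s0.
Proof.
  intros Hn HW HP.
  apply push_inv_edge in HP
    as [(Ex & Hv & _) | (e2 & Hs2 & be2 & g2 & s0 & Hr2 & Hn2 & Hb2 & -> & H2)].
  { exfalso. apply Hn, isV_bar. rewrite Ex. exact Hv. }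
  set (W1 := W ++ [LE (lam B z)]).
  assert (HW1 : wf dag W1 (lam B (tgt z))).
  { eapply wf_cat; [exact HW |]. simpl. rewrite gm_src, gm_tgt. auto using isV_tgt. }
  set (W2 := W1 ++ [LG (lam B (tgt z)) (gone _); LE (lam B (bar z))]).
  assert (HW2 : wf dag W2 (lam B (src z))).
  { eapply wf_cat; [exact HW1 |]. simpl. rewrite gm_bar, gm_tgt, gm_src.
    auto using isV_tgt, tgt_bar. }
  exists (tgt e2), (W1 ++ [LG _ g2; LE (lam B e2)]), s0, (bplus be2).
  split; [exact H2 | split; [| unfold W1; rewrite <- !app_assoc; reflexivity]].
  apply tensor_eq_trans with (src z) W2 (bsrc B z b).
  { apply tensor_eq_word; auto. rewrite <- (app_nil_r W) at 1. unfold W2, W1.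
    rewrite <- app_assoc. apply wequiv_app_l with (v := lam B (src z)); [exact HW |].
    apply rst_sym. simpl. rewrite gm_tgt, gm_bar, gm_src.
    apply wequiv_edge_one_bar. }
  apply tensor_eq_trans with (tgt (bar z)) W2 (bplus (bbar B z b)).
  { pose proof (tensor_eq_tr (eq_sym (tgt_bar z)) (bsrc B z b) HW2) as HT.
    rewrite <- bplus_bbar in HT. exact HT. }
  apply tensor_eq_edge_step with (Hs := Hs2).
  - rewrite gm_bar. intro H. apply Hn, isV_bar, H.
  - rewrite Hr2, gm_bar. reflexivity.
  - pose proof (tensor_eq_refl (bplus b) HW1) as HT. rewrite Hb2 in HT at 2.
    rewrite lact1. exact HT.
Qed.

Definition push_compatible (z : B) (p q : list (letter X)) : Prop :=
  forall (b b2 : BS z) s z' (b' : BS z') s2 z2 (b2' : BS z2) W W2,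
    push z b p s z' b' -> push z b2 q s2 z2 b2' -> tensor_eq z W b z W2 b2 ->
    tensor_eq z' (W ++ s) b' z2 (W2 ++ s2) b2'.

Lemma push_compatible_bar_r z (x : X) l2 : push_compatible z ([LE x; LE (bar x)] ++ l2) l2.
Proof.
  intros b b2 s z' b' s2 z2 b2' W W2 H1 H2 HR. simpl in H1.
  apply push_inv_edge in H1
    as [(Ex & Hv & H1) | (e1 & Hs1 & be1 & g1 & s0 & Hr1 & Hn1 & Hb1 & -> & H1)].
  - apply push_inv_edge in H1 as [(_ & _ & H1) | (e1 & _ & _ & _ & _ & Hr1 & Hn1 & _)].
    + eapply tensor_eq_push; eauto.
    + exfalso. apply Hn1. rewrite Hr1, Ex, bar_vertex by exact Hv. exact Hv.
  - subst z x b. simpl in HR. destruct (tensor_eq_wf HR) as [HW _].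
    assert (HW1 : wf dag (W ++ [LG (lam B (src e1)) g1]) (lam B (src e1)))
      by (eapply wf_cat; [exact HW | simpl; auto using gm_isV, isV_src]).
    destruct (push_backtrack Hn1 HW1 H1) as (zm & W0 & s00 & b0 & HP0 & HR0 & Eq).
    rewrite <- app_assoc in Eq. simpl in Eq. rewrite Eq.
    eapply tensor_eq_push; [exact HP0 | exact H2 |].
    eapply tensor_eq_trans; [apply tensor_eq_sym, HR0 |].
    eapply tensor_eq_trans; [apply tensor_eq_sym, tensor_eq_lact, HW | exact HR].
Qed.

Lemma push_compatible_edge z (x : X) (g : ggrp X x) l2 :
  push_compatible z ([LG (src x) (hsrc X x g); LE x] ++ l2) ([LE x; LG (tgt x) (hplus g)] ++ l2).
Proof.
  intros b b2 s z' b' s2 z2 b2' W W2 H1 H2 HR. simpl in H1, H2.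
  apply push_inv_group in H1 as (h1 & E1 & H1).
  apply push_inv_edge in H1
    as [(-> & Hv & H1) | (e1 & Hs1 & be1 & g1 & s0 & <- & Hn1 & Hb1 & -> & H1)].
  - apply push_inv_edge in H2 as [(_ & _ & H2) | (e2 & Hs2 & _ & _ & _ & Hr2 & Hn2 & _)].
    + rewrite <- (LG_hsrc_vertex g Hv), E1 in H2. apply push_inv_group_rho in H2.
      eauto using tensor_eq_push, tensor_eq_ract.
    + exfalso. apply (rho_edge_not_src Hn2). congruence.
  - subst z. simpl in Hb1. rewrite <- LG_lsrc in E1. apply LG_inj in E1. subst h1.
    destruct (tensor_eq_inv HR) as (k & HW & HW2 & EW & Eb).
    assert (Hb2 : b2 = lact (gmul (ginv k) g1) (bsrc B e1 (ract be1 (ginv g)))).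
    { rewrite bsrc_ract, lsrc_ginv, lactM, lract, <- Hb1, <- ractM, gmulVr, ract1, Eb,
        <- lactM, gmulVl, lact1. reflexivity. }
    assert (HQ : push (src e1) b2 (LE (rho B e1) :: LG (tgt (rho B e1)) (hplus g) :: l2)
                   (LG (lam B (src e1)) (gmul (ginv k) g1) :: LE (lam B e1) :: s0) z' b').
    { rewrite Hb2. apply push_edge; [exact Hn1 |]. rewrite <- LG_lplus. apply push_group.
      rewrite <- bplus_ract, <- ractM, gmulVl, ract1. exact H1. }
    eapply tensor_eq_trans; [| apply (tensor_eq_push (W := W2) HQ H2), tensor_eq_refl, HW2].
    destruct (push_wf H1 (isV_tgt e1)) as [Hs0 _].
    assert (Hl : isV (lam B (src e1))) by apply gm_isV, isV_src.
    assert (Hrest : wf (lam B (src e1)) (LE (lam B e1) :: s0) (lam B z'))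
      by (simpl; rewrite gm_src, <- gm_tgt; auto).
    apply tensor_eq_word; [eapply wf_cat; [eassumption | simpl; auto] .. |].
    change (LG _ g1 :: LE _ :: s0) with ([LG (lam B (src e1)) g1] ++ LE (lam B e1) :: s0).
    change (LG _ (gmul (ginv k) g1) :: LE _ :: s0)
      with ([LG (lam B (src e1)) (gmul (ginv k) g1)] ++ LE (lam B e1) :: s0).
    rewrite !app_assoc. apply (wequiv_app_r (m := lam B (src e1))); [| exact Hrest].
    apply rst_sym. eapply rst_trans.
    { apply (wequiv_app_r (m := lam B (src e1))); [exact EW | simpl; auto]. }
    rewrite <- app_assoc. eapply rst_trans; [apply wequiv_app_mul, HW |].
    rewrite gmulA, gmulVr, gmul1l. apply rst_refl.
Qed.

Lemma push_compatible_basic z p q l2 : wbasic p q -> push_compatible z (p ++ l2) (q ++ l2).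
Proof.
  intro Hb. destruct Hb as [v g h | v | v Hv | x | x g];
    [intros b b2 s z' b' s2 z2 b2' W W2 H1 H2 HR; simpl in H1, H2 ..
    | apply push_compatible_bar_r | apply push_compatible_edge].
  - apply push_inv_group in H1 as (h1 & E1 & H1), H2 as (h2 & E2 & H2).
    assert (v = rho B z) as -> by congruence.
    apply LG_inj in E1, E2. subst h1 h2. apply push_inv_group_rho in H1.
    rewrite <- ractM in H1. eauto using tensor_eq_push, tensor_eq_ract.
  - apply push_inv_group in H1 as (h1 & E1 & H1).
    assert (v = rho B z) as -> by congruence.
    apply LG_inj in E1. subst h1. rewrite ract1 in H1. eauto using tensor_eq_push.
  - apply push_inv_edge in H1 as [(_ & _ & H1) | (e1 & _ & _ & _ & _ & Hr1 & Hn1 & _)].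
    + eauto using tensor_eq_push.
    + exfalso. apply Hn1. rewrite Hr1. exact Hv.
Qed.

Lemma push_compatible_wstep z (a w : X) p p' : wstep a w p p' -> push_compatible z p p'.
Proof.
  intros (l1 & p0 & q0 & l2 & a' & b'' & -> & -> & Hb & _) b b2 s z' b' s2 z2 b2' W W2 H1 H2 HR.
  destruct (push_app H1 (l1 := l1) (l2 := p0 ++ l2) eq_refl) as (s1 & zm & bm & s1r & HA & HB & ->).
  destruct (push_app H2 (l1 := l1) (l2 := q0 ++ l2) eq_refl)
    as (s1' & zm' & bm' & s1r' & HA' & HB' & ->).
  pose proof (tensor_eq_push HA HA' HR) as HRm. pose proof (tensor_eq_vertex HRm). subst zm'.
  rewrite !app_assoc. eapply push_compatible_basic; eauto.
Qed.

Lemma push_compatible_wequiv z (a w : X) p p' : wequiv a w p p' -> wf a p w ->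
  isV z -> rho B z = a -> push_compatible z p p'.
Proof.
  intros H Hw Hz <-. induction H as [x y Hs | x | x y Hxy IH | x y u Hxy IH1 Hyu IH2];
    intros b b2 s z' b' s2 z2 b2' W W2 H1 H2 HR.
  - eapply push_compatible_wstep; eauto.
  - eapply tensor_eq_push; eauto.
  - apply tensor_eq_sym. eapply IH; eauto using tensor_eq_sym. apply (wequiv_wf Hxy), Hw.
  - assert (Hy : wf (rho B z) y w) by (apply (wequiv_wf Hxy), Hw).
    destruct (push_exists b Hz Hy) as (sy & zy & by_ & Hpy).
    eapply tensor_eq_trans; [eapply IH1; eauto; apply tensor_eq_refl, (tensor_eq_wf HR) |].
    eapply IH2; eauto.
Qed.

Section Basepoint.
Variable st : X.

Notation mk z q b p := (@FBR Y X B z q b p).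

Lemma fbequiv_step (e e' : fbraw B) :
  fbvalid dag st e -> fbvalid dag st e' -> fbbasic dag st e e' -> fbequiv dag st e e'.
Proof. intros. apply rst_step. split; auto. Qed.

Lemma fbequiv_valid (e e' : fbraw B) :
  fbequiv dag st e e' -> (fbvalid dag st e <-> fbvalid dag st e').
Proof. intro H. induction H as [e e' (? & ? & _) | | |]; tauto. Qed.

Lemma fbequiv_push_edge (e : B) (be : BS e) (g : ggrp Y (lam B (src e))) q p :
  ~ isV (rho B e) -> fbvalid dag st (mk (src e) q (lact g (bsrc B e be)) (LE (rho B e) :: p)) ->
  fbequiv dag st (mk (src e) q (lact g (bsrc B e be)) (LE (rho B e) :: p))
    (mk (tgt e) ((q ++ [LG (lam B (src e)) g]) ++ [LE (lam B e)]) (bplus be) p).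
Proof.
  intros Hn (_ & Hq & [_ Hp]). simpl in Hq, Hp.
  assert (Hl : isV (lam B (src e))) by apply gm_isV, isV_src.
  assert (Hq1 : wf dag (q ++ [LG (lam B (src e)) g]) (lam B (src e)))
    by (eapply wf_cat; [exact Hq | simpl; auto]).
  assert (Hq2 : wf dag ((q ++ [LG (lam B (src e)) g]) ++ [LE (lam B e)]) (lam B (tgt e)))
    by (eapply wf_cat; [exact Hq1 | simpl; rewrite gm_src, gm_tgt; auto using isV_tgt]).
  assert (Hp' : wf (rho B (tgt e)) p st) by (rewrite gm_tgt; exact Hp).
  assert (Hp2 : wf (rho B (tgt e)) (LE (bar (rho B e)) :: LE (rho B e) :: p) st)
    by (simpl; rewrite gm_tgt, tgt_bar; auto).
  eapply rst_trans.
  { apply rst_sym, fbequiv_step; [| | apply fb_tl];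
      repeat split; simpl; auto using isV_src, gm_src. }
  eapply rst_trans.
  { eapply fbequiv_step; [.. | apply fb_edge; intro H; apply Hn, gm_isV, H];
      [repeat split; simpl; auto using isV_src, gm_src | exact (conj (isV_tgt e) (conj Hq2 Hp2))]. }
  apply fbequiv_step;
    [exact (conj (isV_tgt e) (conj Hq2 Hp2)) | exact (conj (isV_tgt e) (conj Hq2 Hp')) |].
  apply fb_wp.
  change (LE (bar (rho B e)) :: LE (rho B e) :: p) with ([LE (bar (rho B e)); LE (rho B e)] ++ p).
  rewrite <- (app_nil_l p) at 2.
  apply (wequiv_app_r (m := tgt (rho B e))); [| rewrite <- gm_tgt; exact Hp'].
  rewrite gm_tgt. pose proof (wequiv_bar_r (bar (rho B e))) as W. rewrite bar_bar in W. exact W.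
Qed.

Lemma fbequiv_push z (b : BS z) p s z' (b' : BS z') : push z b p s z' b' ->
  forall q, fbvalid dag st (mk z q b p) -> fbequiv dag st (mk z q b p) (mk z' (q ++ s) b' []).
Proof.
  intro H. induction H as [z b | z b h p s z' b' _ IH | z b p s z' b' Hv _ IH |
                           e be g p s z' b' Hn H IH];
    intros q Hval; pose proof Hval as (Hz & Hq & Hp); simpl in Hz, Hq, Hp.
  - rewrite app_nil_r. apply rst_refl.
  - destruct Hp as (Hr & _ & Hp).
    eapply rst_trans; [| apply IH; repeat split; auto].
    apply rst_sym, fbequiv_step, fb_tr; repeat split; simpl; auto.
  - destruct Hp as (_ & Hp). rewrite tgt_vertex in Hp by exact Hv.
    eapply rst_trans; [| apply IH; repeat split; auto].
    apply fbequiv_step; [auto | repeat split; auto |]. apply fb_wp.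
    change (LE (rho B z) :: p) with ([LE (rho B z)] ++ p).
    rewrite <- (app_nil_l p) at 2. apply (wequiv_app_r (m := rho B z)); [| exact Hp].
    apply wequiv_basic; [apply wb_vert, Hv | simpl; try rewrite tgt_vertex; auto .. ].
  - eapply rst_trans; [apply fbequiv_push_edge; auto |].
    replace (q ++ LG (lam B (src e)) g :: LE (lam B e) :: s)
      with (((q ++ [LG (lam B (src e)) g]) ++ [LE (lam B e)]) ++ s)
      by (rewrite <- !app_assoc; reflexivity).
    apply IH. apply (fbequiv_valid (fbequiv_push_edge Hn Hval)), Hval.
Qed.

Lemma tensor_eq_push_fbbasic (e e' : fbraw B) :
  fbvalid dag st e -> fbvalid dag st e' -> fbbasic dag st e e' ->
  forall s z' (b' : BS z') s2 z2 (b2' : BS z2),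
  push (fz e) (fb e) (fp e) s z' b' -> push (fz e') (fb e') (fp e') s2 z2 b2' ->
  tensor_eq z' (fq e ++ s) b' z2 (fq e' ++ s2) b2'.
Proof.
  intros (Hz & Hq & Hp) (Hz' & Hq' & Hp') Hb.
  destruct Hb as [z q q' b p E | z q b p p' E | z q g b p | z q b h p | z q b p Hn];
    simpl in *; intros s z' b' s2 z2 b2' H1 H2.
  - eapply tensor_eq_push; eauto. apply tensor_eq_word; auto.
  - eapply push_compatible_wequiv; eauto. apply tensor_eq_refl; auto.
  - eapply tensor_eq_push; eauto. apply tensor_eq_sym, tensor_eq_lact.
    apply wf_app in Hq as (m & Hq1 & _ & <- & _). exact Hq1.
  - apply push_inv_group_rho in H2. eapply tensor_eq_push; eauto. apply tensor_eq_refl; auto.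
  - assert (Hn' : ~ isV (rho B z)) by (apply (proj1 fibrant); auto).
    destruct (push_backtrack Hn' Hq H2) as (zm & W0 & s0 & b0 & HP0 & HR0 & Eq).
    rewrite <- app_assoc. simpl. rewrite Eq. eapply tensor_eq_push; eauto.
Qed.

Lemma push_exists_valid (e : fbraw B) : fbvalid dag st e ->
  exists s z' (b' : BS z'), push (fz e) (fb e) (fp e) s z' b'.
Proof. intros (Hz & _ & Hp). eapply push_exists; eauto. Qed.

Lemma tensor_eq_push_fbequiv (e e' : fbraw B) : fbequiv dag st e e' -> fbvalid dag st e ->
  forall s z' (b' : BS z') s2 z2 (b2' : BS z2),
  push (fz e) (fb e) (fp e) s z' b' -> push (fz e') (fb e') (fp e') s2 z2 b2' ->
  tensor_eq z' (fq e ++ s) b' z2 (fq e' ++ s2) b2'.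
Proof.
  intro H. induction H as [x y (Hx & Hy & Hb) | x | x y Hxy IH | x y u Hxy IH1 Hyu IH2];
    intros Hv s z' b' s2 z2 b2' H1 H2.
  - eapply tensor_eq_push_fbbasic; eauto.
  - destruct Hv as (Hz & Hq & Hp). eapply tensor_eq_push; eauto. apply tensor_eq_refl; auto.
  - apply tensor_eq_sym. eapply IH; eauto. apply (fbequiv_valid Hxy), Hv.
  - assert (Hy : fbvalid dag st y) by (apply (fbequiv_valid Hxy), Hv).
    destruct (push_exists_valid Hy) as (sy & zy & by_ & Hpy).
    eapply tensor_eq_trans; [eapply IH1 | eapply IH2]; eauto.
Qed.

Lemma fib_lorbit_equiv (x y : fib_elt B st) :
  clos_refl_sym_trans _ (@fib_lorbit _ _ B st) x y -> fib_lorbit x y.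
Proof.
  intro H. induction H as [x y H | [[z b] Hz] | [[z b] Hz] [[z' b'] Hz'] _ [g Eg]
                          | [[z b] Hz] [[z' b'] Hz'] [[z'' b''] Hz''] _ [g Eg] _ [g' Eg']];
    simpl in *; auto.
  - exists (gone _). rewrite lact1. reflexivity.
  - pose proof (f_equal (@projT1 _ _) Eg) as Ez. simpl in Ez. subst z'.
    apply inj_pair2 in Eg. subst b'. exists (ginv g). simpl. rewrite <- lactM, gmulVl, lact1.
    reflexivity.
  - pose proof (f_equal (@projT1 _ _) Eg) as Ez. simpl in Ez. subst z'.
    apply inj_pair2 in Eg. subst b'.
    pose proof (f_equal (@projT1 _ _) Eg') as Ez. simpl in Ez. subst z''.
    apply inj_pair2 in Eg'. subst b''. exists (gmul g' g). simpl. rewrite lactM. reflexivity.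
Qed.

Lemma fbvalid_fibre z W (b : BS z) : isV z -> rho B z = st -> wf dag W (lam B z) ->
  fbvalid dag st (mk z W b []).
Proof. intros Hz <- HW. repeat split; simpl; auto using gm_isV. Qed.

Lemma fbequiv_fibre (z : B) W W' (b : BS z) g : isV z -> rho B z = st ->
  wf dag W (lam B z) -> wf dag W' (lam B z) ->
  wequiv dag (lam B z) W (W' ++ [LG (lam B z) g]) ->
  fbequiv dag st (mk z W b []) (mk z W' (lact g b) []).
Proof.
  intros Hz Hr HW HW' E.
  assert (HWg : wf dag (W' ++ [LG (lam B z) g]) (lam B z))
    by (eapply wf_cat; [exact HW' | simpl; auto using gm_isV]).
  apply rst_trans with (mk z (W' ++ [LG (lam B z) g]) b []);
    apply fbequiv_step; auto using fbvalid_fibre, fb_wq, fb_tl.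
Qed.

Hypothesis left_free_sets : forall z : B, left_free_set (bset B z).

Lemma fb_left_free_of_left_free_sets : fb_left_free B dag st.
Proof.
  intros r [z q b p] Hr Hv E. destruct (push_exists_valid Hv) as (s & z' & b' & HP).
  simpl in HP. destruct Hv as (Hz & Hq & Hp). simpl in Hz, Hq, Hp.
  assert (Hv' : fbvalid dag st (fbact r (mk z q b p)))
    by (repeat split; simpl; auto; eapply wf_cat; eauto).
  pose proof (tensor_eq_push_fbequiv E Hv' HP HP) as HR. simpl in HR.
  destruct (tensor_eq_inv HR) as (k & HW & HW2 & EW & Eb).
  apply eq_sym, left_free_sets in Eb. subst k.
  apply (wequiv_cancel_r (w := lam B z') (l := q ++ s));
    [exact Hr | exact (conj eq_refl (wf_isV Hr)) | exact HW2 |].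
  rewrite app_assoc. apply rst_sym. eapply rst_trans; [exact EW |].
  apply rst_sym, wequiv_app_one. exact HW.
Qed.

Lemma normal_form_exists (x : fbelt B dag st) :
  exists t : {s : list (letter Y) & {z' : B & BS z'}},
    push (fz (proj1_sig x)) (fb (proj1_sig x)) (fp (proj1_sig x))
      (projT1 t) (projT1 (projT2 t)) (projT2 (projT2 t)).
Proof.
  destruct (push_exists_valid (proj2_sig x)) as (s & z' & b' & H).
  exists (existT _ s (existT _ z' b')). exact H.
Qed.

Definition normal_form (x : fbelt B dag st) : {s : list (letter Y) & {z' : B & BS z'}} :=
  proj1_sig (constructive_indefinite_description _ (normal_form_exists x)).

Lemma normal_form_push (x : fbelt B dag st) :
  push (fz (proj1_sig x)) (fb (proj1_sig x)) (fp (proj1_sig x))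
    (projT1 (normal_form x)) (projT1 (projT2 (normal_form x))) (projT2 (projT2 (normal_form x))).
Proof. unfold normal_form. destruct (constructive_indefinite_description _ _). assumption. Qed.

Lemma normal_form_end (x : fbelt B dag st) : rho B (projT1 (projT2 (normal_form x))) = st.
Proof. eapply push_end; [apply normal_form_push | apply (proj2_sig x)]. Qed.

Definition fibre_of (x : fbelt B dag st) : fib_elt B st :=
  exist _ (existT (fun z => BS z) _ (projT2 (projT2 (normal_form x)))) (normal_form_end x).

Lemma fib_lorbit_fibre_of (x y : fbelt B dag st) :
  fb_lorbit x y -> fib_lorbit (fibre_of y) (fibre_of x).
Proof.
  intros (r & Hr & E). destruct x as [ex Hx], y as [ey Hy].
  pose proof (normal_form_push (exist _ ex Hx)) as Px.
  pose proof (normal_form_push (exist _ ey Hy)) as Py. simpl in *.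
  assert (Hv' : fbvalid dag st (fbact r ex))
    by (destruct Hx as (Hz & Hq & Hp); repeat split; simpl; auto; eapply wf_cat; eauto).
  exact (tensor_eq_fibre (tensor_eq_push_fbequiv E Hv' Px Py)).
Qed.

Lemma fb_lorbit_of_fibre_of (x y : fbelt B dag st) :
  fib_lorbit (fibre_of x) (fibre_of y) -> fb_lorbit x y.
Proof.
  destruct x as [[z q b p] Hx], y as [[z2 q2 b2 p2] Hy].
  pose proof (normal_form_push (exist _ _ Hx)) as Px.
  pose proof (normal_form_push (exist _ _ Hy)) as Py.
  pose proof (normal_form_end (exist _ _ Hx)) as Ex.
  unfold fib_lorbit, fibre_of. simpl in *.
  destruct (normal_form (exist _ _ Hx)) as [sx [zx bx]],
           (normal_form (exist _ _ Hy)) as [sy [zy by_]]. simpl in *.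
  intros [g Eg]. pose proof (f_equal (@projT1 _ _) Eg) as Ez. simpl in Ez. subst zy.
  apply inj_pair2 in Eg. subst by_.
  destruct Hx as (Hz & Hq & Hp), Hy as (Hz2 & Hq2 & Hp2). simpl in *.
  destruct (push_wf Px Hz) as [Hsx Hzx]. destruct (push_wf Py Hz2) as [Hsy _].
  assert (HWx : wf dag (q ++ sx) (lam B zx)) by (eapply wf_cat; eauto).
  assert (HWy : wf dag (q2 ++ sy) (lam B zx)) by (eapply wf_cat; eauto).
  (* [r] carries the normal form [q sx (x) bx] of [x] to that of [y], [q2 sy (x) g bx]. *)
  set (r := (q2 ++ sy) ++ [LG (lam B zx) g] ++ word_inv (q ++ sx)).
  assert (Hr : wf dag r dag).
  { eapply wf_cat; [exact HWy |]. eapply wf_cat; [| apply wf_word_inv, HWx].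
    simpl. auto using gm_isV. }
  exists r. split; [exact Hr |]. simpl.
  eapply rst_trans; [apply (fbequiv_push Px); repeat split; simpl; auto; eapply wf_cat; eauto |].
  eapply rst_trans; [| apply rst_sym, (fbequiv_push Py); repeat split; simpl; auto].
  apply fbequiv_fibre; auto; [eapply wf_cat; [eapply wf_cat |]; eauto |].
  unfold r. change (fq (mk z q b p)) with q.
  rewrite <- (app_nil_r ((q2 ++ sy) ++ [LG (lam B zx) g])).
  replace ((((q2 ++ sy) ++ [LG (lam B zx) g] ++ word_inv (q ++ sx)) ++ q) ++ sx)
    with (((q2 ++ sy) ++ [LG (lam B zx) g]) ++ word_inv (q ++ sx) ++ q ++ sx)
    by (rewrite <- !app_assoc; reflexivity).
  apply wequiv_app_l with (v := lam B zx);
    [eapply wf_cat; [exact HWy | simpl; auto using gm_isV] | eapply wequiv_word_inv_l; eauto].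
Qed.

Lemma fibre_of_lorbits (x y : fbelt B dag st) :
  clos_refl_sym_trans _ (@fb_lorbit _ _ B dag st) x y ->
  clos_refl_sym_trans _ (@fib_lorbit _ _ B st) (fibre_of x) (fibre_of y).
Proof.
  intro H. induction H; eauto using rst_refl, rst_sym, rst_trans, rst_step, fib_lorbit_fibre_of.
Qed.

Hypotheses (dag_vertex : isV dag) (st_vertex : isV st).

Lemma fibre_of_onto_orbits (y : fib_elt B st) : exists x, fib_lorbit (fibre_of x) y.
Proof.
  destruct y as [[z b] Hz]. simpl in Hz.
  assert (HzV : isV z).
  { destruct (classic (isV z)) as [H | H]; auto. exfalso.
    apply (proj1 fibrant z H). rewrite Hz. exact st_vertex. }
  destruct (reach_word (@gconn Y dag (lam B z) dag_vertex (gm_isV (lam B) HzV)) dag_vertex)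
    as [l Hl].
  exists (exist _ (mk z l b []) (fbvalid_fibre b HzV Hz Hl)).
  pose proof (normal_form_push (exist _ (mk z l b []) (fbvalid_fibre b HzV Hz Hl))) as Px.
  unfold fib_lorbit, fibre_of. simpl in *.
  destruct (normal_form _) as [s [z' b']]. simpl in *.
  apply push_inv_nil in Px as [_ [<- <-]]. exists (gone _). rewrite lact1. reflexivity.
Qed.

Definition orbit_map (P : fb_orbits B dag st) : fib_orbits B st :=
  qclass (@fib_lorbit _ _ B st) (fibre_of (qrep P)).

Lemma orbit_map_bijective : bijective orbit_map.
Proof.
  split.
  - intros P P' E. apply qclass_inj, fib_lorbit_equiv, fb_lorbit_of_fibre_of in E.
    rewrite (qclass_qrep P), (qclass_qrep P'). apply qclass_eq, rst_step, E.
  - intro Q. rewrite (qclass_qrep Q). destruct (fibre_of_onto_orbits (qrep Q)) as [x Hx].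
    exists (qclass _ x). apply qclass_eq.
    eapply rst_trans; [| apply rst_step, Hx].
    apply fibre_of_lorbits, qrep_spec. apply rst_refl.
Qed.

End Basepoint.
End Fibrant.
End Bisets.

Theorem mainTheorem17 (Y X : GoG) (B : GoB Y X) (dag : Y) (st : X) :
  isV dag -> isV st -> left_free B ->
  fb_left_free B dag st /\
  exists f : fb_orbits B dag st -> fib_orbits B st, bijective f.
Proof.
  intros Hdag Hst [Hfib Hfree]. split.
  - exact (fb_left_free_of_left_free_sets Hfib Hfree).
  - exists (orbit_map Hfib (st := st)). exact (orbit_map_bijective Hfib Hdag Hst).
Qed.
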